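(* Let $I=(p_t)_{t\in[n]}$ be an instance and $\hat I=(\hat p_t)_{t\in[n]}$ a prediction such that $\min\{p_t,\hat p_t\}>0$ for some $t$. Then (Lipschitzness) $|\mathrm{opt}(I)-\mathrm{opt}(\hat I)|\le\eta(I,\hat I)$, and (monotonicity) for every $S\subseteq[n]$, letting $\hat I_S$ be the instance with $t$-th entry $p_t$ for $t\in S$ and $\hat p_t$ for $t\notin S$, we have $\eta(I,\hat I)\ge\eta(I,\hat I_S)$.
   Context: Fix a real parameter $d>0$. An instance is a finite sequence $I=(p_t)_{t\in[T]}$ of nonnegative reals; instances of different lengths are compared by padding with zeros. A solution is a finite set $X=\{x_1<\dots<x_k\}\subseteq[T]$; it is feasible for $I$ if either all $p_t=0$, or $X\ne\emptyset$ and $\max X\ge\max\{t:p_t>0\}$. With $x_0:=0$, $F(I,X)=|X|+\frac1d\sum_{i=1}^{k}\sum_{t=x_{i-1}+1}^{x_i}p_t(x_i-t)$, and $\mathrm{opt}(I)=\min\{F(I,X): X\text{ feasible}\}$. For $a\le b$, the subinstance $I\langle a,b\rangle=(p_t)_{t\in\{a,\dots,b\}}$ is an instance on time set $\{a,\dots,b\}$ (solutions are subsets of $\{a,\dots,b\}$, cost formula with $x_0:=a-1$). For an actual instance $I=(p_t)$ and a predicted instance $\hat I=(\hat p_t)$ on the same time set, $O(I,\hat I)=(\max\{p_t,\hat p_t\})_t$ and $U(I,\hat I)=(\min\{p_t,\hat p_t\})_t$. For an interval $L=\{a,\dots,b\}$, $\tau(L,I,\hat I)=\mathrm{opt}(O(I\langle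 a,b\rangle,\hat I\langle a,b\rangle))-\mathrm{opt}(U(I\langle a,b\rangle,\hat I\langle a,b\rangle))$. A partition of $[n]$ into consecutive intervals $L_1,\dots,L_m$ is non-empty for $U(I,\hat I)$ if every $L_i$ contains some $t$ with $\min\{p_t,\hat p_t\}>0$; let $\Pi(U(I,\hat I))$ be the set of such partitions. The error measure is $\eta(I,\hat I)=\max_{\mathcal P\in\Pi(U(I,\hat I))}\sum_{L\in\mathcal P}\tau(L,I,\hat I)$. *)

From HB Require Import structures.
From mathcomp Require Import all_boot all_order all_algebra.
Set Implicit Arguments. Unset Strict Implicit. Unset Printing Implicit Defensive.
Import Order.TTheory GRing.Theory Num.Theory.
Local Open Scope ring_scope.

Section Defs.
Variable R : realFieldType.
Variable d : R.

(* An instance on the time set {a,...,b} is given by a function p : nat -> R;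
   only the values p t for a <= t <= b matter. *)

Definition in_time_set (a b : nat) (X : {set 'I_(b.+1)}) : bool :=
  [forall x in X, a <= x]%N.

Definition feasible (a b : nat) (p : nat -> R) (X : {set 'I_(b.+1)}) : bool :=
  in_time_set a X &&
  (all (fun t => p t == 0) (index_iota a b.+1)
   || ((X != set0) &&
       [exists x in X, all (fun t => (0 < p t) ==> (t <= x)%N) (index_iota a b.+1)])).

Definition sol_seq (b : nat) (X : {set 'I_(b.+1)}) : seq nat :=
  sort leq [seq nat_of_ord x | x <- enum X].

Fixpoint wait_cost (p : nat -> R) (prev : nat) (xs : seq nat) : R :=
  match xs with
  | [::] => 0
  | x :: xs' => (\sum_(prev.+1 <= t < x.+1) p t * (x - t)%N%:R) + wait_cost p x xs'
  end.

Definition cost (a b : nat) (p : nat -> R) (X : {set 'I_(b.+1)}) : R :=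
  #|X|%:R + d^-1 * wait_cost p a.-1 (sol_seq X).

(* opt(I<a,b>): minimum of F over feasible solutions.  The solution {b} is
   always feasible (for a <= b), so seeding the min with its cost is harmless. *)
Definition opt (a b : nat) (p : nat -> R) : R :=
  \big[Order.min/cost a p [set (@ord_max b)]]_(X : {set 'I_(b.+1)} | feasible a p X)
     cost a p X.

Definition Oinst (p ph : nat -> R) : nat -> R := fun t => Order.max (p t) (ph t).
Definition Uinst (p ph : nat -> R) : nat -> R := fun t => Order.min (p t) (ph t).

Definition tau (p ph : nat -> R) (a b : nat) : R :=
  opt a b (Oinst p ph) - opt a b (Uinst p ph).

(* Partitions of [n] = {1..n} into consecutive intervals L_1,...,L_m are
   encoded by the set C of right endpoints (c in C <-> value c+1 is a right
   endpoint); the partition is valid iff n is a right endpoint. *)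
Definition cuts (n : nat) (C : {set 'I_n}) : seq nat :=
  sort leq [seq (nat_of_ord i).+1 | i <- enum C].

Fixpoint intervals (prev : nat) (cs : seq nat) : seq (nat * nat) :=
  match cs with
  | [::] => [::]
  | c :: cs' => (prev.+1, c) :: intervals c cs'
  end.

Definition partition_intervals (n : nat) (C : {set 'I_n}) : seq (nat * nat) :=
  intervals 0 (cuts C).

Definition is_partition (n : nat) (C : {set 'I_n}) : bool := n \in cuts C.

Definition nonempty_for (u : nat -> R) (n : nat) (C : {set 'I_n}) : bool :=
  all (fun L => has (fun t => 0 < u t) (index_iota L.1 L.2.+1))
      (partition_intervals C).

(* The seed tau 1 n is the value of the trivial partition {[n]}, which lies in
   Pi(U) whenever Pi(U) is non-empty, so the max is exact in that case. *)
Definition eta_err (n : nat) (p ph : nat -> R) : R :=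
  \big[Order.max/tau p ph 1 n]_(C : {set 'I_n} |
        is_partition C && nonempty_for (Uinst p ph) C)
     \sum_(L <- partition_intervals C) tau p ph L.1 L.2.

End Defs.

From HB Require Import structures.
From mathcomp Require Import all_boot all_order all_algebra.
From mathcomp Require Import zify lra.
Set Implicit Arguments. Unset Strict Implicit. Unset Printing Implicit Defensive.
Import Order.TTheory GRing.Theory Num.Theory.
Local Open Scope ring_scope.

(* opt on a window {s+1,...,b} is handled through schedules, the increasing
   lists of chosen times: opt is bounded by the cost of every admissible
   schedule and equals the cost of one of them.  This yields the properties
   of opt used below: it is monotone in the instance, at least 1 on a window
   with a positive request and at most 0 on one without, subadditive over
   adjacent windows (concatenate schedules) and superadditive up to 1 (cut a
   schedule, paying one extra time).

   Lipschitzness: U(I, Ihat) <= I, Ihat <= O(I, Ihat) pointwise, so by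
   monotonicity |opt(I) - opt(Ihat)| <= tau([n]), and the trivial partition
   gives tau([n]) <= eta.  Monotonicity in S: passing to Ihat_S raises U and
   lowers O.  A partition that is non-empty for the new U is regrouped (the
   combinatorial lemma [regroup]) into one that is non-empty for the old U,
   each group made of one block non-empty for U and its neighbouring blocks
   empty for U; the properties of opt show that the tau-values can only
   increase along the way. *)

(* [nat_arith] is [lia] restricted to the hypotheses that are (in)equalities
   of natural numbers; the other hypotheses (about reals, sequences, sets)
   are irrelevant to it and only make [zify] slow. *)
Ltac nat_arith := repeat match goal with
  | H : ?T |- _ => lazymatch T with
      | is_true (leq _ _) => fail
      | is_true (andb (leq _ _) (leq _ _)) => fail
      | @eq nat _ _ => fail
      | _ => lazymatch type of T with Prop => clear H | _ => fail end
      end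
  end; lia.

Lemma path_ltn_mem p xs x : path ltn p xs -> x \in xs -> (p < x)%N.
Proof. by rewrite path_sortedE; [case/andP=> /allP h _ /h | exact: ltn_trans]. Qed.
Arguments path_ltn_mem {p xs x}.

Lemma path_ltn_last p xs x : path ltn p xs -> x \in p :: xs -> (x <= last p xs)%N.
Proof.
elim: xs p x => [|y ys IH] p x /=; first by rewrite inE => _ /eqP ->.
case/andP=> py pys; rewrite inE => /orP[/eqP ->|xin]; last exact: IH.
by have := IH y y pys (mem_head _ _); nat_arith.
Qed.
Arguments path_ltn_last {p xs x}.

Lemma last_le_bound p xs b : (p <= b)%N -> all (fun x => x <= b)%N xs -> (last p xs <= b)%N.
Proof.
move=> pb xs_le; have := mem_last p xs; rewrite inE => /orP[/eqP -> //|].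
exact: (allP xs_le).
Qed.

(* A strictly increasing sequence is recovered by sorting the finite set of
   indices it is the injective image of; this converts the finite sets of
   ordinals encoding solutions and partitions into increasing sequences. *)
Lemma sort_enum_preimage m (g : nat -> nat) (s : seq nat) :
  injective g -> sorted ltn s -> (forall x, x \in s -> exists2 j, (j < m)%N & g j = x) ->
  sort leq [seq g (nat_of_ord i) | i <- enum [set i : 'I_m | g (nat_of_ord i) \in s]] = s.
Proof.
move=> g_inj s_sorted s_img; apply: (irr_sorted_eq ltn_trans ltnn) => //.
  rewrite ltn_sorted_uniq_leq sort_uniq sort_sorted ?andbT; last exact: leq_total.
  by rewrite map_inj_uniq ?enum_uniq // => i j /g_inj /val_inj.
move=> x; rewrite mem_sort; apply/mapP/idP => [[i]|xs].
  by rewrite mem_enum inE => hi ->.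
have [j jm gj] := s_img x xs.
by exists (Ordinal jm); rewrite ?mem_enum ?inE /= gj.
Qed.

Definition pos (R : realFieldType) (q : nat -> R) a b : bool :=
  has (fun t => 0 < q t) (index_iota a b.+1).

Lemma posP (R : realFieldType) (q : nat -> R) a b :
  reflect (exists t, (a <= t <= b)%N /\ 0 < q t) (pos q a b).
Proof.
apply: (iffP hasP) => [[t]|[t [ht qt]]]; last by exists t; rewrite ?mem_index_iota ?ltnS.
by rewrite mem_index_iota ltnS => ht qt; exists t.
Qed.

Lemma pos_widen (R : realFieldType) (q : nat -> R) a b a' b' :
  (a' <= a)%N -> (b <= b')%N -> pos q a b -> pos q a' b'.
Proof.
by move=> a'a bb' /posP[t [ht qt]]; apply/posP; exists t; split=> //; nat_arith.
Qed.

Definition nonneg (R : realFieldType) (q : nat -> R) s b :=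
  forall t, (s < t <= b)%N -> 0 <= q t.

Lemma nonneg_sub (R : realFieldType) (q : nat -> R) s b s' b' :
  nonneg q s b -> (s <= s')%N -> (b' <= b)%N -> nonneg q s' b'.
Proof. by move=> q_ge0 ss' b'b t ht; apply: q_ge0; nat_arith. Qed.

Section Schedules.
Variables (R : realFieldType) (d : R).
Hypothesis d_gt0 : 0 < d.
Implicit Types (q : nat -> R).

(* A schedule for the window (s, b] = {s+1,...,b} is a strictly increasing
   list of times in it; the sorted solutions are exactly the schedules. *)

Definition covers q s b (xs : seq nat) : bool :=
  all (fun t => q t == 0) (index_iota s.+1 b.+1) ||
  has (fun x => all (fun t => (0 < q t) ==> (t <= x)%N) (index_iota s.+1 b.+1)) xs.

Definition admissible q s b (xs : seq nat) : bool :=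
  [&& path ltn s xs, all (fun x => x <= b)%N xs & covers q s b xs].

Definition sched_cost q s (xs : seq nat) : R :=
  (size xs)%:R + d^-1 * wait_cost q s xs.

Lemma coversP q s b xs : nonneg q s b -> reflect
  ((exists t, (s < t <= b)%N /\ 0 < q t) ->
   exists2 x, x \in xs & forall t, (s < t <= b)%N -> 0 < q t -> (t <= x)%N)
  (covers q s b xs).
Proof.
move=> q_ge0; apply: (iffP orP) => [[/allP q0 [t [ht qt]]|/hasP[x xin /allP hx] _]|h].
- by have := q0 t; rewrite mem_index_iota ltnS ht (gt_eqF qt) => /(_ isT).
- by exists x => // t ht qt; have := hx t; rewrite mem_index_iota ltnS ht qt => /(_ isT).
case: (posP q s.+1 b) => [/h [x xin hx]|q_null].
  right; apply/hasP; exists x => //; apply/allP => t.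
  by rewrite mem_index_iota ltnS => ht; apply/implyP; apply: hx.
left; apply/allP => t; rewrite mem_index_iota ltnS => ht.
have := q_ge0 t ht; rewrite le_eqVlt => /orP[/eqP <- //|qt].
by case: q_null; exists t.
Qed.
Arguments coversP {q s b xs}.

Lemma sol_seq_preimage b xs : sorted ltn xs -> all (fun x => x <= b)%N xs ->
  sol_seq [set i : 'I_b.+1 | nat_of_ord i \in xs] = xs.
Proof.
move=> xs_sorted xs_le; apply: (@sort_enum_preimage b.+1 id) => // x xin.
by exists x; rewrite // ltnS; apply: (allP xs_le).
Qed.

Lemma cost_sol_seq s b q (X : {set 'I_b.+1}) : cost d s.+1 q X = sched_cost q s (sol_seq X).
Proof. by rewrite /cost /sched_cost /sol_seq size_sort size_map -cardE. Qed.

Lemma admissible_sol_seq s b q (X : {set 'I_b.+1}) :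
  feasible s.+1 q X -> admissible q s b (sol_seq X).
Proof.
move=> /andP[/forallP X_gt X_cov].
have memS x : (x \in sol_seq X) = [exists i in X, nat_of_ord i == x].
  rewrite /sol_seq mem_sort; apply/mapP/existsP => [[i]|[i /andP[iX /eqP <-]]].
    by rewrite mem_enum => iX ->; exists i; rewrite iX eqxx.
  by exists i; rewrite ?mem_enum.
apply/and3P; split.
- rewrite path_sortedE; last exact: ltn_trans.
  apply/andP; split.
    by apply/allP=> x; rewrite memS => /existsP[i /andP[iX /eqP <-]]; apply: (implyP (X_gt i)).
  rewrite /sol_seq ltn_sorted_uniq_leq sort_uniq sort_sorted ?andbT; last exact: leq_total.
  by rewrite map_inj_uniq ?enum_uniq //; apply: val_inj.
- by apply/allP=> x; rewrite memS => /existsP[i /andP[iX /eqP <-]]; rewrite -ltnS.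
- rewrite /covers; case/orP: X_cov => [-> //|/andP[_ /existsP[i /andP[iX hi]]]].
  apply/orP; right; apply/hasP; exists (nat_of_ord i) => //.
  by rewrite memS; apply/existsP; exists i; rewrite iX eqxx.
Qed.

Lemma feasible_preimage s b q xs : admissible q s b xs ->
  feasible s.+1 q [set i : 'I_b.+1 | nat_of_ord i \in xs].
Proof.
move=> /and3P[xs_path xs_le xs_cov]; apply/andP; split.
  by apply/forallP=> x; apply/implyP; rewrite inE; apply: path_ltn_mem.
case/orP: xs_cov => [-> //|/hasP[x xin hx]]; apply/orP; right.
have xb : (x < b.+1)%N by rewrite ltnS; apply: (allP xs_le).
have xX : Ordinal xb \in [set i : 'I_b.+1 | nat_of_ord i \in xs] by rewrite inE.
apply/andP; split; first by apply/set0Pn; exists (Ordinal xb).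
by apply/existsP; exists (Ordinal xb); rewrite xX.
Qed.

Lemma opt_le_sched s b q xs : admissible q s b xs -> opt d s.+1 b q <= sched_cost q s xs.
Proof.
move=> xs_adm; apply: le_trans (bigmin_le_cond _ _ (feasible_preimage xs_adm)) _.
case/and3P: xs_adm => xs_path xs_le _.
by rewrite cost_sol_seq sol_seq_preimage //; apply: path_sorted xs_path.
Qed.

Lemma opt_attained s b q : (s < b)%N ->
  exists2 xs, admissible q s b xs & opt d s.+1 b q = sched_cost q s xs.
Proof.
move=> sb; rewrite /opt.
apply: (big_ind (fun v => exists2 xs, admissible q s b xs & v = sched_cost q s xs)).
- exists [:: b]; last by rewrite cost_sol_seq /sol_seq enum_set1.
  rewrite /admissible /= sb leqnn /covers /= orbF; apply/orP; right.
  by apply/allP=> t; rewrite mem_index_iota => /andP[_ tb]; apply/implyP; rewrite -ltnS.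
- by move=> x y [xs ? ->] [ys ? ->]; rewrite minEle; case: ifP => _; [exists xs|exists ys].
- by move=> X X_feas; exists (sol_seq X); rewrite ?cost_sol_seq ?admissible_sol_seq.
Qed.


Lemma wait_mono q1 q2 b xs s :
  (forall t, (s < t <= b)%N -> q1 t <= q2 t) ->
  all (fun x => x <= b)%N xs -> path ltn s xs ->
  wait_cost q1 s xs <= wait_cost q2 s xs.
Proof.
elim: xs s => [//|x xs IH] s le_q /= /andP[xb xs_le] /andP[sx xs_path].
apply: lerD; last by apply: IH => // t /andP[xt tb]; apply: le_q; nat_arith.
apply: ler_sum_nat => t /andP[st tx]; apply: ler_wpM2r; first exact: ler0n.
by apply: le_q; nat_arith.
Qed.

Lemma wait_ge0 q b xs s : nonneg q s b ->
  all (fun x => x <= b)%N xs -> path ltn s xs -> 0 <= wait_cost q s xs.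
Proof.
move=> q_ge0 xs_le xs_path.
have wait0 p ys : wait_cost (fun=> 0 : R) p ys = 0.
  by elim: ys p => [|y ys IH] p //=; rewrite IH big1 ?addr0 // => t _; rewrite mul0r.
by rewrite -(wait0 s xs); apply: (@wait_mono (fun=> 0) q b).
Qed.

Lemma wait_cat q s xs1 xs2 :
  wait_cost q s (xs1 ++ xs2) = wait_cost q s xs1 + wait_cost q (last s xs1) xs2.
Proof. by elim: xs1 s => [|x xs1 IH] s /=; rewrite ?add0r // IH addrA. Qed.

Lemma wait_shift q s1 s2 xs : (s1 <= s2)%N ->
  (forall t, (s1 < t <= s2)%N -> q t = 0) -> path ltn s2 xs ->
  wait_cost q s1 xs = wait_cost q s2 xs.
Proof.
case: xs => [//|x xs] /= s12 q0 /andP[s2x _]; congr (_ + _).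
rewrite (big_cat_nat _ (n := s2.+1)) //=; try nat_arith.
by rewrite big_nat big1 ?add0r // => t ht; rewrite q0 ?mul0r //; nat_arith.
Qed.

Lemma opt_mono s b q1 q2 : (s < b)%N ->
  (forall t, (s < t <= b)%N -> 0 <= q1 t /\ q1 t <= q2 t) ->
  opt d s.+1 b q1 <= opt d s.+1 b q2.
Proof.
move=> sb le_q.
have q1_ge0 : nonneg q1 s b by move=> t /le_q [].
have q2_ge0 : nonneg q2 s b by move=> t /le_q [? /(le_trans _)]; apply.
have [xs /and3P[xs_path xs_le xs_cov] ->] := opt_attained q2 sb.
have xs_adm : admissible q1 s b xs.
  apply/and3P; split=> //; apply/(coversP q1_ge0) => -[t [ht q1t]].
  have [|x xin hx] := coversP q2_ge0 xs_cov.
    by exists t; split=> //; apply: lt_le_trans q1t (proj2 (le_q t ht)).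
  exists x => // t' ht' q1t'; apply: hx => //.
  exact: lt_le_trans q1t' (proj2 (le_q t' ht')).
apply: le_trans (opt_le_sched xs_adm) _.
rewrite /sched_cost lerD2l ler_pM2l ?invr_gt0 //.
by apply: (wait_mono _ xs_le xs_path) => t /le_q [].
Qed.

Lemma opt_ge1 s b q : (s < b)%N -> nonneg q s b -> pos q s.+1 b -> 1 <= opt d s.+1 b q.
Proof.
move=> sb q_ge0 q_pos.
have [xs /and3P[xs_path xs_le xs_cov] ->] := opt_attained q sb.
have [|x xin _] := coversP q_ge0 xs_cov; first exact/posP.
have size_ge1 : 1 <= (size xs)%:R :> R.
  by case: xs xin {xs_path xs_le xs_cov} => // y ys _; rewrite ler1n.
have wait_term_ge0 : 0 <= d^-1 * wait_cost q s xs.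
  by apply: mulr_ge0; [rewrite invr_ge0 ltW | exact: wait_ge0 q_ge0 xs_le xs_path].
by apply: le_trans size_ge1 _; rewrite lerDl.
Qed.

Lemma opt_le0 s b q : nonneg q s b -> ~~ pos q s.+1 b -> opt d s.+1 b q <= 0.
Proof.
move=> q_ge0 q_null; have e_adm : admissible q s b [::].
  by apply/and3P; split=> //; apply/(coversP q_ge0) => -[t ht]; case/posP: q_null; exists t.
by apply: le_trans (opt_le_sched e_adm) _; rewrite /sched_cost /= mulr0 addr0.
Qed.

Lemma idle_after_last q s b xs : nonneg q s b -> admissible q s b xs ->
  forall t, (last s xs < t <= b)%N -> q t = 0.
Proof.
move=> q_ge0 /and3P[xs_path _ xs_cov] t ht.
have st : (s < t)%N by have := path_ltn_last xs_path (mem_head s xs); nat_arith.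
have := q_ge0 t ltac:(nat_arith); rewrite le_eqVlt => /orP[/eqP <- //|qt].
have [|x xin hx] := coversP q_ge0 xs_cov; first by exists t; split=> //; nat_arith.
have x_le : (x <= last s xs)%N by apply: path_ltn_last xs_path _; rewrite inE xin orbT.
by have := hx t ltac:(nat_arith) qt; nat_arith.
Qed.

Lemma admissible_cat q s b c xs1 xs2 : (s < b < c)%N -> nonneg q s c ->
  admissible q s b xs1 -> admissible q b c xs2 -> admissible q s c (xs1 ++ xs2).
Proof.
move=> /andP[sb bc] q_ge0 /and3P[path1 le1 cov1] /and3P[path2 le2 cov2].
have q1_ge0 : nonneg q s b := nonneg_sub q_ge0 (leqnn s) (ltnW bc).
have q2_ge0 : nonneg q b c := nonneg_sub q_ge0 (ltnW sb) (leqnn c).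
apply/and3P; split.
- have last_b : (last s xs1 <= b)%N by apply: last_le_bound le1; nat_arith.
  rewrite cat_path path1 /=.
  by case: xs2 path2 {le2 cov2} => //= y ys /andP[b_y ->]; rewrite andbT; nat_arith.
- by rewrite all_cat le2 andbT; apply/allP => x /(allP le1); nat_arith.
apply/(coversP q_ge0) => -[t [ht qt]].
case: (posP q b.+1 c) => [pos2|null2].
  have [x xin hx] := coversP q2_ge0 cov2 pos2.
  have bx := path_ltn_mem path2 xin.
  exists x; first by rewrite mem_cat xin orbT.
  move=> t' ht' qt'; case: (leqP t' b) => t'b; first nat_arith.
  by apply: hx => //; nat_arith.
have le_b t' : (s < t' <= c)%N -> 0 < q t' -> (t' <= b)%N.
  by move=> ht' qt'; case: (leqP t' b) => // bt'; case: null2; exists t'; split=> //; nat_arith.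
have [|x xin hx] := coversP q1_ge0 cov1.
  by exists t; split=> //; have := le_b t ht qt; nat_arith.
exists x; first by rewrite mem_cat xin.
by move=> t' ht' qt'; apply: hx => //; have := le_b t' ht' qt'; nat_arith.
Qed.

(* opt is subadditive over adjacent windows: concatenate optimal schedules;
   the second one may start counting waits at b since the first one leaves no
   positive request after its last time. *)
Lemma opt_subadd s b c q : (s < b < c)%N -> nonneg q s c ->
  opt d s.+1 c q <= opt d s.+1 b q + opt d b.+1 c q.
Proof.
move=> sbc q_ge0; have /andP[sb bc] := sbc.
have q1_ge0 : nonneg q s b := nonneg_sub q_ge0 (leqnn s) (ltnW bc).
have [xs1 adm1 ->] := opt_attained q sb.
have [xs2 adm2 ->] := opt_attained q bc.
apply: le_trans (opt_le_sched (admissible_cat sbc q_ge0 adm1 adm2)) _.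
have [_ le1 _] := and3P adm1; have [path2 _ _] := and3P adm2.
have last_b : (last s xs1 <= b)%N by apply: last_le_bound le1; nat_arith.
rewrite /sched_cost size_cat natrD wait_cat (@wait_shift q (last s xs1) b xs2) //.
  by rewrite mulrDr addrACA.
exact: idle_after_last q1_ge0 adm1.
Qed.

(* Cutting a schedule of (s, c] at b: the times up to b, completed by b itself,
   serve (s, b], and the times after b serve (b, c]; this costs at most one
   extra time and no extra waiting (requests of (s, b] now leave no later than
   before, those of (b, c] wait as before). *)
Lemma split_sched q b c xs s : (b <= c)%N -> (s < b)%N -> path ltn s xs ->
  all (fun x => x <= c)%N xs ->
  (forall t, (s < t <= b)%N -> 0 < q t -> exists2 x, x \in xs & (t <= x)%N) ->
  nonneg q s c ->
  exists ys1 ys2, [/\ path ltn s ys1, all (fun x => x <= b)%N ys1, b \in ys1,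
    path ltn b ys2 & all (fun x => x <= c)%N ys2] /\ [/\
    (forall x, x \in xs -> (b < x)%N -> x \in ys2),
    (size ys1 + size ys2 <= (size xs).+1)%N &
    wait_cost q s ys1 + wait_cost q b ys2 <= wait_cost q s xs].
Proof.
move=> bc; elim: xs s => [|x xs IH] s sb.
  move=> _ _ served q_ge0; exists [:: b], [::]; do 2!split=> //=; rewrite ?andbT ?leqnn ?inE //.
  rewrite !addr0 big_nat big1 // => t ht.
  have := q_ge0 t ltac:(nat_arith); rewrite le_eqVlt => /orP[/eqP <-|qt]; first by rewrite mul0r.
  by have [y] := served t ltac:(nat_arith) qt.
move=> /= /andP[sx xs_path] /andP[xc xs_le] served q_ge0.
case: (ltngtP x b) => [xb|bx|xb].
- have [||ys1 [ys2 [[h1 h2 h3 h4 h5] [h6 h7 h8]]]] := IH x xb xs_path xs_le.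
  + move=> t ht qt; have [y] := served t ltac:(nat_arith) qt.
    by rewrite inE => /orP[/eqP -> | yin] ty; [nat_arith | exists y].
  + by move=> t ht; apply: q_ge0; nat_arith.
  exists (x :: ys1), ys2; do 2!split=> //=.
  + by rewrite sx h1.
  + by rewrite h2 andbT ltnW.
  + by rewrite inE h3 orbT.
  + by move=> y; rewrite inE => /orP[/eqP -> | yin] bly; [nat_arith | exact: h6].
  + by rewrite -addrA lerD2l.
- exists [:: b], (x :: xs); do 2!split=> //=; rewrite ?andbT ?leqnn ?inE ?sx ?xc ?xs_le ?xs_path //.
  + nat_arith.
  + rewrite addr0 addrA lerD2r [X in _ <= X](big_cat_nat _ (n := b.+1)) /=; try nat_arith.
    rewrite lerD2r; apply: ler_sum_nat => t ht; apply: ler_wpM2l.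
      by apply: q_ge0; nat_arith.
    by rewrite ler_nat; apply: leq_sub2r; nat_arith.
- subst x; exists [:: b], xs; do 2!split=> //=; rewrite ?andbT ?leqnn ?inE ?sx ?xc ?xs_le ?xs_path //.
  + by move=> y; rewrite inE => /orP[/eqP -> | yin] bly //; nat_arith.
  + by rewrite addr0.
Qed.

(* opt is superadditive up to one time: split an optimal schedule of (s, c]. *)
Lemma opt_superadd s b c q : (s < b < c)%N -> nonneg q s c ->
  opt d s.+1 b q + opt d b.+1 c q <= opt d s.+1 c q + 1.
Proof.
move=> /andP[sb bc] q_ge0.
have q1_ge0 : nonneg q s b := nonneg_sub q_ge0 (leqnn s) (ltnW bc).
have q2_ge0 : nonneg q b c := nonneg_sub q_ge0 (ltnW sb) (leqnn c).
have [xs /and3P[xs_path xs_le xs_cov] ->] := opt_attained q (ltn_trans sb bc).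
have served t : (s < t <= c)%N -> 0 < q t -> exists2 x, x \in xs & (t <= x)%N.
  move=> ht qt; have [|x xin hx] := coversP q_ge0 xs_cov; first by exists t.
  by exists x => //; apply: hx.
have [||ys1 [ys2 [[path1 le1 b_in path2 le2] [later size_le wait_le]]]] :=
  @split_sched q b c xs s (ltnW bc) sb xs_path xs_le.
- by move=> t ht; apply: served; nat_arith.
- by [].
have adm1 : admissible q s b ys1.
  by apply/and3P; split=> //; apply/(coversP q1_ge0) => _; exists b => // t /andP[].
have adm2 : admissible q b c ys2.
  apply/and3P; split=> //; apply/(coversP q2_ge0) => -[t [ht qt]].
  have [|x xin hx] := coversP q_ge0 xs_cov; first by exists t; split=> //; nat_arith.
  have tx := hx t ltac:(nat_arith) qt.
  exists x; first by apply: later => //; nat_arith.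
  by move=> t' ht' qt'; apply: hx => //; nat_arith.
apply: le_trans (lerD (opt_le_sched adm1) (opt_le_sched adm2)) _.
have size_le' : (size ys1)%:R + (size ys2)%:R <= (size xs)%:R + 1 :> R.
  by rewrite -natrD natr1 ler_nat.
have wait_le' : d^-1 * wait_cost q s ys1 + d^-1 * wait_cost q b ys2 <= d^-1 * wait_cost q s xs.
  by rewrite -mulrDr ler_wpM2l // invr_ge0 ltW.
rewrite /sched_cost; lra.
Qed.
End Schedules.

(* Consider a partition of {1,...,n}
   into blocks satisfying e', and an upward-closed property e of intervals
   holding for {1,...,n}.  Group every block satisfying e with the adjacent
   blocks violating it; the groups satisfy e.  If the block values T are
   bounded by the group values Psi, with a gain of one on blocks violating e,
   and Psi is superadditive up to one, then the total T-value of the blocks is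
   at most the total Tau-value of the groups, for any Tau above Psi.  Intervals
   are written {s+1,...,b}, as produced by [intervals]. *)
Section Regroup.
Variables (R : realFieldType) (n : nat).
Variables (T Psi Tau : nat -> nat -> R) (e e' : nat -> nat -> bool).
Hypothesis e_mono : forall a b a' b', (a' <= a)%N -> (b <= b')%N -> e a b -> e a' b'.
Hypothesis T_le_Psi : forall s b, (s < b <= n)%N -> T s.+1 b <= Psi s.+1 b.
Hypothesis T_le_Psi_null : forall s b, (s < b <= n)%N -> e' s.+1 b -> ~~ e s.+1 b ->
  T s.+1 b <= Psi s.+1 b - 1.
Hypothesis Psi_join : forall s b c, (s < b < c)%N -> (c <= n)%N ->
  Psi s.+1 b + Psi b.+1 c <= Psi s.+1 c + 1.
Hypothesis Psi_le_Tau : forall s b, (s < b <= n)%N -> Psi s.+1 b <= Tau s.+1 b.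

Definition dominated s (V : R) := exists2 cs : seq nat,
  [&& path ltn s cs, last s cs == n & all (fun L => e L.1 L.2) (intervals s cs)] &
  V <= \sum_(L <- intervals s cs) Tau L.1 L.2.

Lemma dominated_single s V : (s < n)%N -> e s.+1 n -> V <= Psi s.+1 n -> dominated s V.
Proof.
move=> sn es le_V; exists [:: n]; first by rewrite /= sn eqxx es.
rewrite big_cons big_nil addr0; apply: le_trans le_V (Psi_le_Tau _).
by rewrite sn leqnn.
Qed.

Lemma dominated_cons s b V W : (s < b <= n)%N -> e s.+1 b -> V <= Psi s.+1 b ->
  dominated b W -> dominated s (V + W).
Proof.
move=> sbn es le_V [cs /and3P[cs_path cs_last cs_e] le_W]; have /andP[sb _] := sbn.
exists (b :: cs); first by rewrite /= sb cs_path cs_last es.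
rewrite big_cons; apply: lerD le_W; exact: le_trans le_V (Psi_le_Tau sbn).
Qed.

(* The blocks are scanned from left to right.  The open group is {s+1,...,prev}
   and X is the T-value of its blocks, bounded by its Psi-value with a slack of
   one while it contains no block satisfying e (flag st unset). *)
Lemma regroup_from cs : forall s prev (st : bool) X,
  (s < prev)%N -> path ltn prev cs -> last prev cs = n ->
  all (fun L => e' L.1 L.2) (intervals prev cs) -> e s.+1 n ->
  (st -> e s.+1 prev) -> X <= Psi s.+1 prev - (if st then 0 else 1) ->
  dominated s (X + \sum_(L <- intervals prev cs) T L.1 L.2).
Proof.
elim: cs => [|c cs IH] s prev st X sp /=.
  move=> _ prev_n _ en _ le_X; rewrite big_nil addr0; subst prev.
  by apply: dominated_single => //; case: st le_X => le_X; lra.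
move=> /andP[pc cs_path] cs_last /andP[e'c cs_e'] en st_e le_X.
have cn : (c <= n)%N by rewrite -cs_last; apply: path_ltn_last cs_path (mem_head _ _).
have spc : (s < prev < c)%N by rewrite sp pc.
have sc : (s < c)%N by nat_arith.
have le_T : T prev.+1 c <= Psi prev.+1 c by apply: T_le_Psi; nat_arith.
have join := Psi_join spc cn.
rewrite big_cons addrA /=.
case: (boolP (e prev.+1 c)) => ec; last first.
  (* a block violating e joins the open group, paying for the merge *)
  apply: IH => //; first by move=> /st_e; apply: e_mono => //; apply: ltnW.
  have : T prev.+1 c <= Psi prev.+1 c - 1 by apply: T_le_Psi_null => //; nat_arith.
  by case: st {st_e} le_X => /= le_X; lra.
case: st st_e le_X => st_e /= le_X; last first.
  (* the first block satisfying e joins the open group, which loses its slack *)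
  apply: (IH s c true) => //; last lra.
  by move=> _; apply: e_mono ec => //; nat_arith.
(* the open group already satisfies e: close it and open the block *)
rewrite subr0 in le_X; rewrite -addrA.
apply: (dominated_cons (b := prev)); [nat_arith | exact: st_e isT | exact: le_X |].
apply: (IH prev c true) => //; last by rewrite subr0.
by apply: e_mono ec.
Qed.

Lemma regroup cs : path ltn 0 cs -> last 0 cs = n ->
  all (fun L => e' L.1 L.2) (intervals 0 cs) -> e 1 n ->
  dominated 0 (\sum_(L <- intervals 0 cs) T L.1 L.2).
Proof.
case: cs => [|c cs] /=.
  by move=> _ n0 _ _; exists [::]; rewrite /= -?n0 ?big_nil.
move=> /andP[c_pos cs_path] cs_last /andP[e'c cs_e'] en.
have cn : (c <= n)%N by rewrite -cs_last; apply: path_ltn_last cs_path (mem_head _ _).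
rewrite big_cons; apply: (regroup_from (st := e 1 c)) => //.
case: (boolP (e 1 c)) => ec /=; first by rewrite subr0; apply: T_le_Psi; nat_arith.
by apply: T_le_Psi_null => //; nat_arith.
Qed.

End Regroup.

Lemma cuts_path n (C : {set 'I_n}) : path ltn 0 (cuts C).
Proof.
rewrite /cuts path_sortedE; last exact: ltn_trans.
apply/andP; split; first by apply/allP => x; rewrite mem_sort => /mapP[i _ ->].
rewrite ltn_sorted_uniq_leq sort_uniq sort_sorted ?andbT; last exact: leq_total.
by rewrite map_inj_uniq ?enum_uniq // => i j [] /val_inj.
Qed.

Lemma cuts_last n (C : {set 'I_n}) : is_partition C -> last 0 (cuts C) = n.
Proof.
move=> n_cut; apply/eqP; rewrite eqn_leq last_le_bound //=.
  by apply: path_ltn_last (cuts_path C) _; rewrite inE; apply/orP; right.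
by apply/allP => x; rewrite /cuts mem_sort => /mapP[i _ ->].
Qed.

Lemma cuts_preimage n cs : path ltn 0 cs -> last 0 cs = n ->
  cuts [set i : 'I_n | (nat_of_ord i).+1 \in cs] = cs.
Proof.
move=> cs_path cs_last; apply: (@sort_enum_preimage n succn cs) => [x y []//||x xin].
  exact: path_sorted cs_path.
have := path_ltn_mem cs_path xin.
have : (x <= n)%N by rewrite -cs_last; apply: path_ltn_last cs_path _; rewrite inE xin orbT.
by exists x.-1; nat_arith.
Qed.


Lemma Uinst_nonneg (R : realFieldType) (q1 q2 : nat -> R) s b :
  nonneg q1 s b -> nonneg q2 s b -> nonneg (Uinst q1 q2) s b.
Proof. by move=> q1_ge0 q2_ge0 t ht; rewrite /Uinst le_min q1_ge0 ?q2_ge0. Qed.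

Lemma Oinst_nonneg (R : realFieldType) (q1 q2 : nat -> R) s b :
  nonneg q1 s b -> nonneg (Oinst q1 q2) s b.
Proof. by move=> q1_ge0 t ht; rewrite /Oinst le_max q1_ge0. Qed.

Section ErrorMeasure.
Variables (R : realFieldType) (d : R) (n : nat) (p ph : nat -> R).

Lemma tau_le_eta : tau d p ph 1 n <= eta_err d n p ph.
Proof. exact: bigmax_ge_id. Qed.

Lemma partition_le_eta cs : (0 < n)%N -> path ltn 0 cs -> last 0 cs = n ->
  all (fun L => pos (Uinst p ph) L.1 L.2) (intervals 0 cs) ->
  \sum_(L <- intervals 0 cs) tau d p ph L.1 L.2 <= eta_err d n p ph.
Proof.
move=> n_gt0 cs_path cs_last cs_pos.
have C_cuts := cuts_preimage cs_path cs_last.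
rewrite -[in intervals 0 cs]C_cuts; apply: le_bigmax_cond.
rewrite /is_partition /nonempty_for /partition_intervals C_cuts cs_pos andbT.
case: cs {cs_path cs_pos C_cuts} cs_last => [/= n0|c cs <-]; last exact: mem_last.
by rewrite -n0 in n_gt0.
Qed.

Lemma eta_le M : tau d p ph 1 n <= M ->
  (forall cs, path ltn 0 cs -> last 0 cs = n ->
     all (fun L => pos (Uinst p ph) L.1 L.2) (intervals 0 cs) ->
     \sum_(L <- intervals 0 cs) tau d p ph L.1 L.2 <= M) ->
  eta_err d n p ph <= M.
Proof.
move=> tau_le partition_le; apply: bigmax_le => // C /andP[C_part C_pos].
exact: partition_le (cuts_path C) (cuts_last C_part) C_pos.
Qed.

End ErrorMeasure.

(* Lipschitzness: U(I, Ihat) <= I, Ihat <= O(I, Ihat) pointwise, so opt(I) and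
   opt(Ihat) both lie between opt(U) and opt(O). *)
Lemma opt_lipschitz (R : realFieldType) (d : R) n (p ph : nat -> R) :
  0 < d -> (0 < n)%N -> nonneg p 0 n -> nonneg ph 0 n ->
  `|opt d 1 n p - opt d 1 n ph| <= tau d p ph 1 n.
Proof.
move=> d_gt0 n_gt0 p_ge0 ph_ge0.
have U_ge0 := Uinst_nonneg p_ge0 ph_ge0.
have U_le_p : opt d 1 n (Uinst p ph) <= opt d 1 n p.
  by apply: opt_mono => // t ht; rewrite U_ge0 // ge_min lexx.
have U_le_ph : opt d 1 n (Uinst p ph) <= opt d 1 n ph.
  by apply: opt_mono => // t ht; rewrite U_ge0 // ge_min lexx orbT.
have p_le_O : opt d 1 n p <= opt d 1 n (Oinst p ph).
  by apply: opt_mono => // t ht; rewrite p_ge0 // le_max lexx.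
have ph_le_O : opt d 1 n ph <= opt d 1 n (Oinst p ph).
  by apply: opt_mono => // t ht; rewrite ph_ge0 // le_max lexx orbT.
rewrite /tau ler_norml; apply/andP; split; lra.
Qed.

(* Replacing the prediction by the actual value on S raises
   U = U(I, Ihat) to U' = U(I, Ihat_S) and lowers O = O(I, Ihat) to
   O' = O(I, Ihat_S).  A partition that is non-empty for U' is regrouped into
   one that is non-empty for U, with group value Psi = opt(O') - opt(U). *)
Section Monotonicity.
Variables (R : realFieldType) (d : R) (n : nat) (p ph : nat -> R) (S : nat -> bool).
Hypotheses (d_gt0 : 0 < d) (p_ge0 : nonneg p 0 n) (ph_ge0 : nonneg ph 0 n).
Local Notation phS := (fun t => if S t then p t else ph t).
Local Notation Psi a b := (opt d a b (Oinst p phS) - opt d a b (Uinst p ph)).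

Lemma Uinst_le t : Uinst p ph t <= Uinst p phS t.
Proof. by rewrite /Uinst; case: (S t); rewrite ?lexx // le_min ge_min !lexx. Qed.

Lemma Oinst_ge t : Oinst p phS t <= Oinst p ph t.
Proof. by rewrite /Oinst; case: (S t); rewrite ?lexx // ge_max le_max !lexx. Qed.

Let U_ge0 : nonneg (Uinst p ph) 0 n := Uinst_nonneg p_ge0 ph_ge0.

Let U'_ge0 : nonneg (Uinst p phS) 0 n.
Proof. by apply: Uinst_nonneg => // t ht; case: (S t); [apply: p_ge0 | apply: ph_ge0]. Qed.

Lemma block_le_group s b : (s < b <= n)%N -> tau d p phS s.+1 b <= Psi s.+1 b.
Proof.
move=> /andP[sb bn]; rewrite /tau lerD2l lerN2.
by apply: opt_mono => // t ht; rewrite U_ge0 ?Uinst_le //; nat_arith.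
Qed.

Lemma block_gain s b : (s < b <= n)%N -> pos (Uinst p phS) s.+1 b ->
  ~~ pos (Uinst p ph) s.+1 b -> tau d p phS s.+1 b <= Psi s.+1 b - 1.
Proof.
move=> /andP[sb bn] U'_pos U_null.
have U'_ge1 : 1 <= opt d s.+1 b (Uinst p phS).
  by apply: opt_ge1 => //; apply: nonneg_sub U'_ge0 _ bn.
have U_le0 : opt d s.+1 b (Uinst p ph) <= 0.
  by apply: (opt_le0 d _ U_null); apply: nonneg_sub U_ge0 _ bn.
rewrite /tau; lra.
Qed.

Lemma group_join s b c : (s < b < c)%N -> (c <= n)%N ->
  Psi s.+1 b + Psi b.+1 c <= Psi s.+1 c + 1.
Proof.
move=> sbc cn.
have O'_ge0 : nonneg (Oinst p phS) s c by apply: nonneg_sub (Oinst_nonneg _ p_ge0) _ cn.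
have := opt_superadd d_gt0 sbc O'_ge0.
have := opt_subadd d sbc (nonneg_sub U_ge0 (leq0n s) cn).
lra.
Qed.

Lemma group_le_tau s b : (s < b <= n)%N -> Psi s.+1 b <= tau d p ph s.+1 b.
Proof.
move=> /andP[sb bn]; rewrite /tau lerD2r.
apply: opt_mono => // t ht; split; last exact: Oinst_ge.
by rewrite /Oinst le_max p_ge0 //; nat_arith.
Qed.

Lemma eta_monotone : pos (Uinst p ph) 1 n ->
  eta_err d n p phS <= eta_err d n p ph.
Proof.
move=> U_pos; have n_gt0 : (0 < n)%N by case/posP: U_pos => t [ht _]; nat_arith.
apply: eta_le => [|cs cs_path cs_last cs_pos].
  apply: le_trans (tau_le_eta d n p ph).
  by apply: le_trans (block_le_group _) (group_le_tau _); rewrite n_gt0 leqnn.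
have [cs' /and3P[path' /eqP last' pos'] le_sum] :=
  regroup (Psi := fun a b => Psi a b) (@pos_widen R _) block_le_group block_gain
    group_join group_le_tau cs_path cs_last cs_pos U_pos.
exact: le_trans le_sum (partition_le_eta d n_gt0 path' last' pos').
Qed.

End Monotonicity.

Theorem mainTheorem4 (R : realFieldType) (d : R) (n : nat) (p ph : nat -> R) :
  0 < d ->
  (forall t : nat, (1 <= t <= n)%N -> 0 <= p t) ->
  (forall t : nat, (1 <= t <= n)%N -> 0 <= ph t) ->
  (exists t : nat, (1 <= t <= n)%N /\ 0 < Order.min (p t) (ph t)) ->
  `|opt d 1 n p - opt d 1 n ph| <= eta_err d n p ph /\
  (forall S : nat -> bool,
     eta_err d n p (fun t => if S t then p t else ph t) <= eta_err d n p ph).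
Proof.
move=> d_gt0 p_ge0 ph_ge0 U_pos.
have U_pos' : pos (Uinst p ph) 1 n by apply/posP.
have n_gt0 : (0 < n)%N by case: U_pos => t [ht _]; nat_arith.
split; last by move=> S; apply: eta_monotone.
exact: le_trans (opt_lipschitz d_gt0 n_gt0 p_ge0 ph_ge0) (tau_le_eta d n p ph).
Qed.
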